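(* For every integer $k\ge 2$ and every positive integer $n$, \[ \mathrm{ex}_3\big(n, C^{(3)}_{2k}\big)\le t_{2k}(n)+\mathrm{ex}(n,C_{2k}). \]
   Context: A Berge cycle of length $m$ in a hypergraph is a family of $m$ distinct hyperedges $H_0,\dots,H_{m-1}$ for which there exist distinct vertices $v_0,\dots,v_{m-1}$ with $\{v_i,v_{i+1}\}\subset H_i$ for $0\le i\le m-1$ (indices mod $m$). $\mathrm{ex}_3(n,C^{(3)}_m)$ is the maximum number of hyperedges in a 3-uniform hypergraph on $n$ vertices with no Berge cycle of length $m$. $\mathrm{ex}(n,C_{2k})$ is the maximum number of edges of a simple graph on $n$ vertices with no cycle of length $2k$. $t_\ell(n)$ is the maximum number of triangles in a simple graph on $n$ vertices containing no cycle of length $\ell$. *)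

From mathcomp Require Import all_boot.
Set Implicit Arguments. Unset Strict Implicit. Unset Printing Implicit Defensive.

Definition uniform3 n (F : {set {set 'I_n}}) : bool :=
  [forall e in F, #|e| == 3].

Definition simple_graph n (G : {set {set 'I_n}}) : bool :=
  [forall e in G, #|e| == 2].

Definition has_berge_cycle n m (F : {set {set 'I_n}}) : bool :=
  [exists H : {ffun 'I_m -> {set 'I_n}},
    [exists v : {ffun 'I_m -> 'I_n},
      [&& injectiveb H, injectiveb v &
          [forall i : 'I_m,
             [&& H i \in F, v i \in H i & v (ordS i) \in H i]]]]].

Definition has_cycle n m (G : {set {set 'I_n}}) : bool :=
  [exists v : {ffun 'I_m -> 'I_n},
    injectiveb v && [forall i : 'I_m, [set v i; v (ordS i)] \in G]].

Definition triangles n (G : {set {set 'I_n}}) : nat :=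
  #|[set T : {set 'I_n} | (#|T| == 3) &&
       [forall x in T, forall y in T, (x != y) ==> ([set x; y] \in G)]]|.

Definition ex3_berge n m : nat :=
  \max_(F : {set {set 'I_n}} | uniform3 F && ~~ has_berge_cycle m F) #|F|.

Definition ex_cycle n m : nat :=
  \max_(G : {set {set 'I_n}} | simple_graph G && ~~ has_cycle m G) #|G|.

Definition t_cycle n m : nat :=
  \max_(G : {set {set 'I_n}} | simple_graph G && ~~ has_cycle m G) triangles G.

From mathcomp Require Import all_boot zify.

Set Implicit Arguments.
Unset Strict Implicit.
Unset Printing Implicit Defensive.

(* Take a maximal matching between hyperedges and the pairs of vertices they
   contain, and let G be the graph of matched pairs.  An unmatched hyperedge has
   all three of its pairs matched (maximality), so it is a triangle of G; hence
   #|F| <= #|G| + triangles G.  A cycle of length m > 2 in G has distinct edges,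
   and their matched hyperedges are distinct, so it is a Berge cycle of F. *)

Lemma ordSS_neq m (j : 'I_m) : 2 < m -> ordS (ordS j) != j.
Proof.
move=> m_gt2; apply/eqP => /(congr1 val) /=.
have modS x : x < m -> x.+1 %% m = (if x.+1 == m then 0 else x.+1).
  move=> x_lt; case: eqP => [->|ne]; first exact: modnn.
  by rewrite modn_small //; lia.
have j_lt := ltn_ord j.
rewrite (modS j j_lt); case: eqP => [jS_eq|jS_neq]; first by rewrite modn_small; lia.
by rewrite modS; [case: eqP; lia | lia].
Qed.

Lemma cycle_edges_inj (T : finType) m (v : 'I_m -> T) :
  2 < m -> injective v -> injective (fun i => [set v i; v (ordS i)]).
Proof.
move=> m_gt2 v_inj i j e_ij.
have : v i \in [set v j; v (ordS j)] by rewrite -e_ij set21.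
case/set2P => [/v_inj // | /v_inj ij].
have : v (ordS i) \in [set v j; v (ordS j)] by rewrite -e_ij set22.
case/set2P => [/v_inj ji | /v_inj /ordS_inj //].
by case/negP: (ordSS_neq j m_gt2); rewrite -ij ji.
Qed.

Section Matching.
Variables (A B : finType) (adj : A -> B -> bool).

(* A set of adjacent pairs is a matching iff both projections are injective
   on it, i.e. preserve its cardinality. *)
Definition matching (M : {set A * B}) : bool :=
  [&& [forall p in M, adj p.1 p.2], #|fst @: M| == #|M| & #|snd @: M| == #|M|].

Lemma matching0 : matching set0.
Proof. by rewrite /matching !imset0 !cards0 eqxx !andbT; apply/forall_inP => p; rewrite inE. Qed.

Lemma matchingU1 M a b : matching M -> adj a b ->
  a \notin fst @: M -> b \notin snd @: M -> matching ((a, b) |: M).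
Proof.
case/and3P=> /forall_inP M_adj /eqP M_fst /eqP M_snd ab a_free b_free.
have ab_new : (a, b) \notin M by apply: contra a_free => abM; apply: imset_f abM.
apply/and3P; split.
- by apply/forall_inP => p /setU1P[-> // | /M_adj].
- by rewrite imsetU1 !cardsU1 a_free ab_new M_fst.
- by rewrite imsetU1 !cardsU1 b_free ab_new M_snd.
Qed.

Lemma maximal_matching_exists : exists2 M, matching M &
  forall a b, adj a b -> (a \in fst @: M) || (b \in snd @: M).
Proof.
case: (arg_maxnP (fun M : {set A * B} => #|M|) matching0) => M M_match M_max.
exists M => // a b ab; apply/negPn/negP; rewrite negb_or => /andP[a_free b_free].
have ab_new : (a, b) \notin M by apply: contra a_free => abM; apply: imset_f abM.
by have := M_max _ (matchingU1 M_match ab a_free b_free); rewrite cardsU1 ab_new; lia.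
Qed.

Lemma matching_adj M p : matching M -> p \in M -> adj p.1 p.2.
Proof. by case/and3P=> /forall_inP M_adj _ _ /M_adj. Qed.

Lemma matching_fst_inj M : matching M -> {in M &, injective fst}.
Proof. by case/and3P=> _ /imset_injP. Qed.

Lemma card_matching_snd M : matching M -> #|snd @: M| = #|M|.
Proof. by case/and3P=> _ _ /eqP. Qed.

Lemma card_matching_fst M : matching M -> #|fst @: M| = #|M|.
Proof. by case/and3P=> _ /eqP. Qed.

End Matching.

Section HypergraphToGraph.
Variables (n : nat) (F : {set {set 'I_n}}).

Definition hyperedge_pair (h e : {set 'I_n}) : bool := [&& h \in F, e \subset h & #|e| == 2].

Lemma simple_graph_matched_pairs M : matching hyperedge_pair M -> simple_graph (snd @: M).
Proof.
move=> M_match; apply/forall_inP => e /imsetP[p pM ->].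
by case/and3P: (matching_adj M_match pM).
Qed.

Lemma berge_cycle_of_matched_cycle m M : 2 < m -> matching hyperedge_pair M ->
  has_cycle m (snd @: M) -> has_berge_cycle m F.
Proof.
move=> m_gt2 M_match /existsP[v /andP[/injectiveP v_inj /forallP v_cycle]].
pose e i := [set v i; v (ordS i)].
have /fin_all_exists[H HM] : forall i, exists h, (h, e i) \in M.
  move=> i; have /imsetP[p pM p_e] := v_cycle i.
  by exists p.1; rewrite /e p_e -surjective_pairing.
apply/existsP; exists [ffun i => H i]; apply/existsP; exists v.
apply/and3P; split; last 2 first.
- exact/injectiveP.
- apply/forallP => i; rewrite ffunE.
  case/and3P: (matching_adj M_match (HM i)) => /= HF /subsetP e_sub _.
  by rewrite HF !e_sub ?set21 ?set22.
apply/injectiveP => i j; rewrite !ffunE => H_ij.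
have /(congr1 snd) /= := matching_fst_inj M_match (HM i) (HM j) H_ij.
exact: cycle_edges_inj.
Qed.

Hypothesis F_uniform : uniform3 F.

Lemma unmatched_le_triangles (M : {set {set 'I_n} * {set 'I_n}}) :
  (forall h e, hyperedge_pair h e -> (h \in fst @: M) || (e \in snd @: M)) ->
  #|F :\: fst @: M| <= triangles (snd @: M).
Proof.
move=> M_max; apply: subset_leq_card; apply/subsetP => h.
rewrite in_setD => /andP[h_free hF].
rewrite inE (forall_inP F_uniform h hF) /=.
apply/forall_inP => x xh; apply/forall_inP => y yh; apply/implyP => xy.
have xy_in : hyperedge_pair h [set x; y].
  rewrite /hyperedge_pair hF cards2 xy andbT.
  by apply/subsetP => z /set2P[->|->].
by have := M_max _ _ xy_in; rewrite (negbTE h_free).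
Qed.

Lemma card_uniform3_le_triangles_edges m : 2 < m -> ~~ has_berge_cycle m F ->
  exists2 G : {set {set 'I_n}}, simple_graph G && ~~ has_cycle m G &
    #|F| <= triangles G + #|G|.
Proof.
move=> m_gt2 F_free.
have [M M_match M_max] := maximal_matching_exists hyperedge_pair.
exists (snd @: M).
  rewrite simple_graph_matched_pairs //=.
  by apply: contra F_free; apply: berge_cycle_of_matched_cycle.
have F_split : F \subset fst @: M :|: (F :\: fst @: M).
  by apply/subsetP => h hF; rewrite in_setU in_setD hF andbT orbN.
rewrite (card_matching_snd M_match) -(card_matching_fst M_match) addnC.
apply: (leq_trans (subset_leq_card F_split)); apply: (leq_trans (leq_card_setU _ _)).
by rewrite leq_add2l unmatched_le_triangles.
Qed.

End HypergraphToGraph.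

Theorem theorem2 (k n : nat) (hk : 2 <= k) (hn : 0 < n) :
  ex3_berge n (2 * k) <= t_cycle n (2 * k) + ex_cycle n (2 * k).
Proof.
apply/bigmax_leqP => F /andP[F_uniform F_free].
have m_gt2 : 2 < 2 * k by lia.
have [G G_extremal F_le] := card_uniform3_le_triangles_edges F_uniform m_gt2 F_free.
apply: (leq_trans F_le); rewrite /t_cycle /ex_cycle.
by apply: leq_add; apply: (leq_bigmax_cond G G_extremal).
Qed.
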